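(* In the standard LLP setup, for all $s\in\Sigma^*$ and all $N,M\ge1$: $\overline{f^M_{cons}(s)}|_1\subseteq\overline{f^N_{optm}(s)}|_1$.
   Context: Standard LLP setup. $\Sigma=\Sigma_c\,\dot\cup\,\Sigma_{uc}$ is a finite alphabet partitioned into controllable and uncontrollable events. The plant $G$ has generated language $L(G)$ and marked language $L_m(G)$ with $L(G)=\overline{L_m(G)}$ ($\overline{M}$ = set of prefixes of strings in $M$). The legal language $K\subseteq L_m(G)$ satisfies $K=\overline{K}\cap L_m(G)$. For a prefix-closed $L$, $M$ is controllable w.r.t. $L$ if $\overline{M}\Sigma_{uc}\cap L\subseteq\overline{M}$. For a language $L$ and $s\in\Sigma^*$: $L/s=\{t: st\in L\}$; $L|_N=\{t\in L:|t|\le N\}$. $M^{\uparrow/s|_N}$ is the supremal sublanguage of $M$ controllable w.r.t. $L(G)/s|_N$. Conservative attitude: $f^N_{cons}(s)=[K/s|_{N-1}]^{\uparrow/s|_N}$; optimistic attitude: $f^N_{optm}(s)=[K/s|_N\cup(\overline{K}/s|_N\setminus\overline{K}/s|_{N-1})]^{\uparrow/s|_N}$. *)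

From mathcomp Require Import all_boot.
Set Implicit Arguments. Unset Strict Implicit. Unset Printing Implicit Defensive.

Definition lang (S : Type) := seq S -> Prop.

Definition subl (S : Type) (A B : lang S) : Prop := forall t, A t -> B t.

Definition pref (S : Type) (A : lang S) : lang S := fun t => exists u, A (t ++ u).

Definition quot (S : Type) (A : lang S) (s : seq S) : lang S := fun t => A (s ++ t).

Definition trunc (S : Type) (A : lang S) (N : nat) : lang S :=
  fun t => A t /\ size t <= N.

Definition lunion (S : Type) (A B : lang S) : lang S := fun t => A t \/ B t.
Definition ldiff (S : Type) (A B : lang S) : lang S := fun t => A t /\ ~ B t.

(* M is controllable w.r.t. (prefix-closed) L, uncontrollable events given by uc:
   \overline{M} Sigma_uc \cap L \subseteq \overline{M} *)
Definition controllable (S : Type) (uc : pred S) (M L : lang S) : Prop :=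
  forall t (e : S), pref M t -> uc e -> L (rcons t e) -> pref M (rcons t e).

Definition supC (S : Type) (uc : pred S) (M L : lang S) : lang S :=
  fun t => exists M' : lang S, [/\ subl M' M, controllable uc M' L & M' t].

(* L(G) = \overline{L_m(G)} ; Lm is the marked language of the plant *)
Definition f_cons (S : Type) (uc : pred S) (Lm K : lang S) (N : nat) (s : seq S)
  : lang S :=
  supC uc (trunc (quot K s) N.-1) (trunc (quot (pref Lm) s) N).

Definition f_optm (S : Type) (uc : pred S) (Lm K : lang S) (N : nat) (s : seq S)
  : lang S :=
  supC uc
    (lunion (trunc (quot K s) N)
            (ldiff (trunc (quot (pref K) s) N) (trunc (quot (pref K) s) N.-1)))
    (trunc (quot (pref Lm) s) N).

From mathcomp Require Import all_boot.
From mathcomp Require Import zify.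
Set Implicit Arguments. Unset Strict Implicit. Unset Printing Implicit Defensive.

(* Every string of [f_cons M s] lies in a sublanguage A of
   [K/s|_(M-1)] that is controllable w.r.t. [L(G)/s|_M].  Cutting A at depth N,
     cut_at N A = {w in A : |w| <= N} u {w in pref A : |w| = N},
   gives a language that
   - has the same prefixes as A up to length N            ([pref_cut_at]),
   - lies inside the optimistic legal language at depth N   ([cut_at_optimistic]),
   - is controllable w.r.t. [L(G)/s|_N]                     ([controllable_cut_at]):
     a prefix of it has length < M, so one more event stays within the horizon
     M where A is controllable.
   Hence it is one of the languages whose union is [f_optm N s], and all strings
   of length <= N in pref (f_cons M s) are prefixes of [f_optm N s]
   ([pref_f_cons_f_optm]); theorem 7 is the case of length <= 1. *)

Lemma pref_quot (S : Type) (K : lang S) (s : seq S) :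
  subl (pref (quot K s)) (quot (pref K) s).
Proof. by move=> w [u Kswu]; exists u; rewrite -catA. Qed.

Lemma pref_supC (S : Type) (uc : pred S) (B T L : lang S) :
  subl B T -> controllable uc B L -> subl (pref B) (pref (supC uc T L)).
Proof. by move=> BT ctlB w [u Bwu]; exists u, B. Qed.

Section CutAtDepth.
Variables (S : Type) (N : nat).

Definition cut_at (A : lang S) : lang S :=
  fun w => (A w /\ size w <= N) \/ (pref A w /\ size w = N).

(* Cutting loses no prefix of length <= N: extend w along a string of A,
   stopping at length N if that string is longer. *)
Lemma pref_cut_at (A : lang S) (w : seq S) :
  pref A w -> size w <= N -> pref (cut_at A) w.
Proof.
move=> [v Awv] wN; case: (leqP (size (w ++ v)) N) => [wvN | Nwv].
  by exists v; left.
exists (take (N - size w) v); right; split.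
  by exists (drop (N - size w) v); rewrite -catA cat_take_drop.
by move: Nwv; rewrite !size_cat size_take; case: ifP; lia.
Qed.

Lemma pref_cut_at_inv (A : lang S) (w : seq S) :
  pref (cut_at A) w -> pref A w /\ size w <= N.
Proof.
move=> [u [[Awu wuN] | [[v Awuv] wuN]]]; rewrite size_cat in wuN.
  by split; [exists u | lia].
by split; [exists (u ++ v); rewrite catA | lia].
Qed.

Lemma cut_at_optimistic (K P : lang S) (m : nat) (A : lang S) :
  1 <= N -> subl (pref K) P -> subl A (trunc K m) ->
  subl (cut_at A) (lunion (trunc K N) (ldiff (trunc P N) (trunc P N.-1))).
Proof.
move=> N1 KP AK w [[Aw wN] | [[v Awv] wN]].
  by left; split=> //; case: (AK _ Aw).
right; split; last by move=> [_]; lia.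
by split; [apply: KP; exists v; case: (AK _ Awv) | rewrite wN].
Qed.

(* Cutting preserves controllability: a prefix of the cut has length < m.+1,
   so appending one event stays inside the horizon where A is controllable. *)
Lemma controllable_cut_at (uc : pred S) (L : lang S) (m : nat) (A : lang S) :
  (forall w, A w -> size w <= m) -> controllable uc A (trunc L m.+1) ->
  controllable uc (cut_at A) (trunc L N).
Proof.
move=> Am ctlA t e pt uce [Lte teN].
have [[v Atv] tN] := pref_cut_at_inv pt.
have tm : size t <= m by have := Am _ Atv; rewrite size_cat; lia.
apply: pref_cut_at; last by [].
by apply: ctlA => //; [exists v | split=> //; rewrite size_rcons].
Qed.

End CutAtDepth.

Lemma pref_f_cons_f_optm (S : Type) (uc : pred S) (Lm K : lang S)
  (s : seq S) (N M : nat) : 1 <= N -> 1 <= M ->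
  subl (trunc (pref (f_cons uc Lm K M s)) N) (pref (f_optm uc Lm K N s)).
Proof.
case: M => [//|m] N1 _ w [[u [A [AK ctlA Awu]]] wN].
have Am : forall v, A v -> size v <= m by move=> v /AK [].
apply: (pref_supC (B := cut_at N A)).
- exact: cut_at_optimistic N1 (@pref_quot _ K s) AK.
- exact: controllable_cut_at ctlA.
- by apply: pref_cut_at; first by exists u.
Qed.

Theorem theorem7 (Sigma : finType) (uc : pred Sigma) (Lm K : lang Sigma)
  (hKLm : subl K Lm) (hKclosed : forall t, K t <-> (pref K t /\ Lm t))
  (s : seq Sigma) (N M : nat) (hN : 1 <= N) (hM : 1 <= M) :
  subl (trunc (pref (f_cons uc Lm K M s)) 1)
       (trunc (pref (f_optm uc Lm K N s)) 1).
Proof.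
move=> t [ht t1]; split=> //.
apply: (pref_f_cons_f_optm hN hM).
by split=> //; apply: leq_trans hN.
Qed.
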